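(* Let $\star\in\{\boxtimes,\circ\}$, let $G,H$ be graphs with non-empty edge sets, and let $M_G\subseteq E_G$, $M_H\subseteq E_H$. The following are equivalent: (1) $F_{\ast}(M_G,M_H)$ is a maximum $1$-matching of $G\star H$; (2) $M_G$ is a perfect $1$-matching of $G$ and $M_H$ is a perfect $1$-matching of $H$; (3) $F_{\ast}(M_G,M_H)$ is a perfect $1$-matching of $G\star H$.
   Context: Graphs are finite, simple, undirected. A $1$-matching of $G$ is a set of pairwise vertex-disjoint edges; it is maximum if it has largest cardinality among $1$-matchings of $G$, and perfect if every vertex is incident to one of its edges. Products on $V_G\times V_H$: in $G\boxtimes H$, $(g,h)\sim(g',h')$ iff (i) $\{g,g'\}\in E_G$, $h=h'$; or (ii) $g=g'$, $\{h,h'\}\in E_H$; or (iii) $\{g,g'\}\in E_G$ and $\{h,h'\}\in E_H$; in $G\circ H$ iff $\{g,g'\}\in E_G$ or (ii). $F_{\ast}(M_G,M_H)=\{\{(g,h),(g',h')\}:\{g,g'\}\in M_G,\{h,h'\}\in M_H\}$. *)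

(* Finite simple undirected graphs are given by a vertex
   finType V and an adjacency relation e : rel V that is symmetric and
   irreflexive; edges are 2-element vertex sets. *)
From mathcomp Require Import all_boot.
Set Implicit Arguments. Unset Strict Implicit. Unset Printing Implicit Defensive.

Section Graphs.
Variable V : finType.

Definition edges (e : rel V) : {set {set V}} :=
  [set [set p.1; p.2] | p : V * V & e p.1 p.2].

Definition matching (e : rel V) (M : {set {set V}}) : Prop :=
  M \subset edges e /\
  (forall a b, a \in M -> b \in M -> a != b -> [disjoint a & b]).

Definition maximum_matching (e : rel V) (M : {set {set V}}) : Prop :=
  matching e M /\ (forall M' : {set {set V}}, matching e M' -> #|M'| <= #|M|).

Definition perfect_matching (e : rel V) (M : {set {set V}}) : Prop :=
  matching e M /\ (forall v : V, exists2 a, a \in M & v \in a).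
End Graphs.

Inductive prod_kind := Strong | Lexico.

Definition prod_rel (k : prod_kind) (VG VH : finType) (eG : rel VG) (eH : rel VH)
  : rel (VG * VH) :=
  fun x y =>
  match k with
  | Strong => [|| eG x.1 y.1 && (x.2 == y.2),
                  (x.1 == y.1) && eH x.2 y.2
                | eG x.1 y.1 && eH x.2 y.2]
  | Lexico => eG x.1 y.1 || ((x.1 == y.1) && eH x.2 y.2)
  end.

Definition Fstar (VG VH : finType) (MG : {set {set VG}}) (MH : {set {set VH}})
  : {set {set VG * VH}} :=
  [set [set (p.1.1, p.2.1); (p.1.2, p.2.2)]
     | p : (VG * VG) * (VH * VH)
     & ([set p.1.1; p.1.2] \in MG) && ([set p.2.1; p.2.2] \in MH)].

(* Let P be the strong or lexicographic product of G and H, and let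
   F = F_*(M_G, M_H).  The proof rests on two general facts about a graph:
   a perfect matching is maximum (it saturates every vertex, and a matching
   with m edges saturates 2m vertices), and a maximum matching saturates at
   least one end of every edge (otherwise the edge augments it).  Then:
   (2) -> (3): F of two perfect matchings saturates every (g,h);
   (3) -> (1): perfect matchings are maximum;
   (1) -> (2): for g in G and {h,h'} in M_H, the product edge
       {(g,h),(g,h')} has a saturated end, so g is saturated (same for H);
   (3) -> (2): project the saturation of (g,h0) and (g0,h). *)
From mathcomp Require Import all_boot.
Set Implicit Arguments. Unset Strict Implicit. Unset Printing Implicit Defensive.

Definition covered (V : finType) (M : {set {set V}}) (v : V) : Prop :=
  exists2 a, a \in M & v \in a.

Lemma set2_eq_other (T : finType) (x x' y' : T) :
  [set x; x'] = [set x; y'] -> x' = y'.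
Proof.
move=> E; have : x' \in [set x; y'] by rewrite -E !inE eqxx orbT.
rewrite !inE => /orP[]/eqP // x'x.
have : y' \in [set x; x'] by rewrite E !inE eqxx orbT.
by rewrite !inE x'x orbb => /eqP.
Qed.

Section Graph.
Variables (V : finType) (e : rel V).
Hypotheses (sym : symmetric e) (irr : irreflexive e).

Lemma edges_mem x y : e x y -> [set x; y] \in edges e.
Proof. by move=> exy; apply/imsetP; exists (x, y); rewrite ?inE. Qed.

Lemma edges_at A x : A \in edges e -> x \in A -> exists2 y, A = [set x; y] & e x y.
Proof.
case/imsetP=> [[a b]]; rewrite inE /= => eab ->; rewrite !inE => /orP[]/eqP->.
  by exists b.
by exists a; [exact: setUC | rewrite sym].
Qed.

Lemma edges_rel x y : [set x; y] \in edges e -> e x y.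
Proof.
move=> xyE; have [y' Exy ey'] := edges_at xyE (set21 x y).
by rewrite (set2_eq_other Exy).
Qed.

Lemma edges_card A : A \in edges e -> #|A| = 2.
Proof.
case/imsetP=> [[a b]]; rewrite inE /= => eab ->; rewrite cards2.
by case: eqP eab => // ->; rewrite irr.
Qed.

Lemma edges_witness : edges e != set0 -> exists x y, e x y.
Proof. by case/set0Pn=> A /imsetP [[x y]]; rewrite inE /= => exy _; exists x, y. Qed.

Lemma matching_share M A B x :
  matching e M -> A \in M -> B \in M -> x \in A -> x \in B -> A = B.
Proof.
move=> [_ hd] hA hB xA xB; apply/eqP; apply/negPn/negP=> ne.
by move: (disjointFr (hd _ _ hA hB ne) xA); rewrite xB.
Qed.

Lemma matchingP (M : {set {set V}}) : M \subset edges e ->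
  (forall A B x, A \in M -> B \in M -> x \in A -> x \in B -> A = B) ->
  matching e M.
Proof.
move=> sM share; split=> // A B hA hB ne; apply/pred0P=> z /=.
by apply/negP=> /andP[zA zB]; move: ne; rewrite (share A B z) ?eqxx.
Qed.

Lemma matching_card M : matching e M -> #|cover M| = 2 * #|M|.
Proof.
move=> [sM hd].
have /trivIsetP/eqP <- : {in M &, forall A B : {set V}, A != B -> [disjoint A & B]}.
  by move=> A B; apply: hd.
rewrite (eq_bigr (fun _ => 2)) ?sum_nat_const 1?mulnC // => A hA.
exact/edges_card/(subsetP sM).
Qed.

Lemma perfect_maximum M : perfect_matching e M -> maximum_matching e M.
Proof.
move=> [mM cM]; split=> // M' mM'.
have coverT : cover M = setT.
  by apply/setP=> v; rewrite inE; case: (cM v) => a ha va; apply/bigcupP; exists a.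
have := subset_leq_card (subsetT (cover M')).
by rewrite matching_card // -coverT matching_card // leq_mul2l.
Qed.

Lemma augment M x y : matching e M -> e x y -> ~ covered M x -> ~ covered M y ->
  matching e ([set x; y] |: M) /\ #|[set x; y] |: M| = #|M|.+1.
Proof.
move=> mM exy nx ny.
have xyM : [set x; y] \notin M.
  by apply/negP=> xyM; apply: nx; exists [set x; y]; rewrite ?set21.
split; last by rewrite cardsU1 xyM.
apply: matchingP.
  apply/subsetP=> A; rewrite !inE => /orP[/eqP->|]; first exact: edges_mem.
  by apply/(subsetP mM.1).
have fresh B z : B \in M -> z \in [set x; y] -> z \notin B.
  move=> hB; rewrite !inE => /orP[]/eqP-> ; apply/negP=> zB.
  - by apply: nx; exists B.
  - by apply: ny; exists B.
move=> A B z; rewrite !inE => /orP[/eqP->|hA] /orP[/eqP->|hB] // zA zB.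
- by move: (fresh B z hB zA); rewrite zB.
- by move: (fresh A z hA zB); rewrite zA.
- exact: matching_share mM hA hB zA zB.
Qed.

Lemma maximum_covers_edge M x y :
  maximum_matching e M -> e x y -> covered M x \/ covered M y.
Proof.
move=> [mM maxM] exy.
case: (boolP [exists a in M, x \in a]) => [/exists_inP[a ? ?]|/exists_inP nx].
  by left; exists a.
case: (boolP [exists a in M, y \in a]) => [/exists_inP[a ? ?]|/exists_inP ny].
  by right; exists a.
have [mM' cardM'] := augment mM exy nx ny.
by move: (maxM _ mM'); rewrite cardM' ltnn.
Qed.
End Graph.

Section Product.
Variables (k : prod_kind) (VG VH : finType) (eG : rel VG) (eH : rel VH).
Hypotheses (symG : symmetric eG) (symH : symmetric eH).
Variables (MG : {set {set VG}}) (MH : {set {set VH}}).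
Hypotheses (sMG : MG \subset edges eG) (sMH : MH \subset edges eH).
Local Notation P := (prod_rel k eG eH).
Local Notation F := (Fstar MG MH).

Lemma prod_irr : irreflexive eG -> irreflexive eH -> irreflexive P.
Proof. by move=> irrG irrH [g h]; case: k => /=; rewrite irrG irrH !andbF. Qed.

Lemma prod_edge g g' h h' : eG g g' -> eH h h' -> P (g, h) (g', h').
Proof. by move=> e1 e2; case: k => /=; rewrite e1 e2 ?andbT ?orbT. Qed.

Lemma prod_edge_fibre g h h' : eH h h' -> P (g, h) (g, h').
Proof. by move=> e2; case: k => /=; rewrite e2 eqxx ?andbT ?orbT. Qed.

Lemma prod_edge_layer h g g' : eG g g' -> P (g, h) (g', h).
Proof. by move=> e1; case: k => /=; rewrite e1 ?eqxx. Qed.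

Lemma Fstar_mem g g' h h' : [set g; g'] \in MG -> [set h; h'] \in MH ->
  [set (g, h); (g', h')] \in F.
Proof. by move=> gM hM; apply/imsetP; exists ((g, g'), (h, h')); rewrite // inE /= gM hM. Qed.

Lemma Fstar_at A z : A \in F -> z \in A -> exists g' h',
  [/\ [set z.1; g'] \in MG, [set z.2; h'] \in MH & A = [set z; (g', h')]].
Proof.
case/imsetP=> [[[g g'] [h h']]]; rewrite inE /= => /andP[gM hM] ->.
rewrite !inE => /orP[]/eqP->; first by exists g', h'.
by exists g, h; split; rewrite /= 1?setUC.
Qed.

Lemma Fstar_covered z : covered F z -> covered MG z.1 /\ covered MH z.2.
Proof.
case=> A hA zA; have [g' [h' [gM hM _]]] := Fstar_at hA zA.
by split; [exists [set z.1; g'] | exists [set z.2; h']]; rewrite // setU11.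
Qed.

Lemma Fstar_matching : matching eG MG -> matching eH MH -> matching P F.
Proof.
move=> mG mH; apply: matchingP.
  apply/subsetP=> A /imsetP [[[g g'] [h h']]]; rewrite inE /= => /andP[gM hM] ->.
  apply/edges_mem/prod_edge; apply: edges_rel => //.
  - exact: (subsetP sMG).
  - exact: (subsetP sMH).
move=> A B z hA hB zA zB.
have [g1 [h1 [g1M h1M ->]]] := Fstar_at hA zA.
have [g2 [h2 [g2M h2M ->]]] := Fstar_at hB zB.
have /set2_eq_other-> := matching_share mG g1M g2M (set21 _ _) (set21 _ _).
by have /set2_eq_other-> := matching_share mH h1M h2M (set21 _ _) (set21 _ _).
Qed.

(* A non-empty matching F forces both factors to be matchings: two edges of
   M_G through x, paired with one fixed edge of M_H, give edges of F through
   a common vertex, hence they coincide (and symmetrically for M_H). *)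
Lemma Fstar_matching_factors A0 :
  matching P F -> A0 \in F -> matching eG MG /\ matching eH MH.
Proof.
move=> mF /imsetP [[[g g'] [h h']]]; rewrite inE /= => /andP[gM hM] _.
split; apply: matchingP => // A B x hA hB xA xB.
- have [a EA _] := edges_at symG (subsetP sMG _ hA) xA.
  have [b EB _] := edges_at symG (subsetP sMG _ hB) xB.
  rewrite EA EB in hA hB *.
  have := matching_share mF (Fstar_mem hA hM) (Fstar_mem hB hM) (set21 _ _) (set21 _ _).
  by move/set2_eq_other => [->].
- have [a EA _] := edges_at symH (subsetP sMH _ hA) xA.
  have [b EB _] := edges_at symH (subsetP sMH _ hB) xB.
  rewrite EA EB in hA hB *.
  have := matching_share mF (Fstar_mem gM hA) (Fstar_mem gM hB) (set21 _ _) (set21 _ _).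
  by move/set2_eq_other => [->].
Qed.

Lemma Fstar_perfect :
  perfect_matching eG MG -> perfect_matching eH MH -> perfect_matching P F.
Proof.
move=> [mG cG] [mH cH]; split; first exact: Fstar_matching.
move=> [g h]; have [a aM ga] := cG g; have [b bM hb] := cH h.
have [g' Ea _] := edges_at symG (subsetP sMG _ aM) ga.
have [h' Eb _] := edges_at symH (subsetP sMH _ bM) hb.
exists [set (g, h); (g', h')]; last exact: setU11.
by apply: Fstar_mem; rewrite -?Ea -?Eb.
Qed.

Lemma Fstar_perfect_factors (g0 : VG) (h0 : VH) :
  perfect_matching P F -> perfect_matching eG MG /\ perfect_matching eH MH.
Proof.
move=> [mF cF]; have [A0 hA0 _] := cF (g0, h0).
have [mG mH] := Fstar_matching_factors mF hA0.
split; split=> // v.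
- exact: (Fstar_covered (cF (v, h0))).1.
- exact: (Fstar_covered (cF (g0, v))).2.
Qed.

(* (1) -> (2), given one edge in each factor: F saturates an end of
   {(g,h),(g',h')}, so it is non-empty; then each fibre edge
   {(v,h),(v,h')} with {h,h'} in M_H has a saturated end, so v is saturated
   by M_G (symmetrically for M_H, using {(a,w),(a',w)} for some {a,a'} in M_G). *)
Lemma Fstar_maximum_factors g g' h h' : eG g g' -> eH h h' ->
  maximum_matching P F -> perfect_matching eG MG /\ perfect_matching eH MH.
Proof.
move=> egg ehh maxF.
have [A0 hA0] : exists A0, A0 \in F.
  by case: (maximum_covers_edge maxF (prod_edge egg ehh)) => -[A hA _]; exists A.
have [mG mH] := Fstar_matching_factors maxF.1 hA0.
case/imsetP: hA0 => [[[a a'] [b b']]]; rewrite inE /= => /andP[aM bM] _.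
have eaa := edges_rel symG (subsetP sMG _ aM).
have ebb := edges_rel symH (subsetP sMH _ bM).
split; split=> // v.
- by case: (maximum_covers_edge maxF (prod_edge_fibre v ebb)) => /Fstar_covered[].
- by case: (maximum_covers_edge maxF (prod_edge_layer v eaa)) => /Fstar_covered[].
Qed.
End Product.

Theorem mainTheorem19 (k : prod_kind) (VG VH : finType)
  (eG : rel VG) (eH : rel VH)
  (symG : symmetric eG) (irrG : irreflexive eG)
  (symH : symmetric eH) (irrH : irreflexive eH)
  (neG : edges eG != set0) (neH : edges eH != set0)
  (MG : {set {set VG}}) (MH : {set {set VH}})
  (sMG : MG \subset edges eG) (sMH : MH \subset edges eH) :
  (maximum_matching (prod_rel k eG eH) (Fstar MG MH) <->
     perfect_matching eG MG /\ perfect_matching eH MH) /\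
  (perfect_matching eG MG /\ perfect_matching eH MH <->
     perfect_matching (prod_rel k eG eH) (Fstar MG MH)).
Proof.
have [g [g' egg]] := edges_witness neG.
have [h [h' ehh]] := edges_witness neH.
split; split.
- exact: (Fstar_maximum_factors symG symH sMG sMH egg ehh).
- case=> pG pH; apply: (perfect_maximum (prod_irr k irrG irrH)).
  exact: Fstar_perfect.
- by case; apply: Fstar_perfect.
- exact: (Fstar_perfect_factors symG symH sMG sMH g h).
Qed.
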